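(* Let $n>m\ge 0$ be integers. Let $(\mathbf{p})(t)$ be a disk rational Bézier curve of degree $n$ with control disks $(\mathbf{p}_i)=(x_i,y_i)_{r_i}$ (centers $\mathbf{p}_i\in\mathbb{R}^2$, radii $r_i\ge 0$) and weights $\omega_i>0$, $i=0,\dots,n$, and let $(\check{\mathbf{p}})(t)$ be a disk rational Bézier curve of degree $m$ with control disks $(\check{\mathbf{p}}_j)=(\check x_j,\check y_j)_{\check r_j}$ and weights $\check\omega_j>0$, $j=0,\dots,m$. Then $(\mathbf{p})(t)=(\check{\mathbf{p}})(t)$ for all $t\in[0,1]$ (i.e. the center curves coincide and the radius functions coincide on $[0,1]$) if and only if $$\sum_{j=\max(0,i-n)}^{\min(m,i)}\frac{\binom{m}{j}\binom{n}{i-j}}{\binom{m+n}{i}}\check\omega_j\,\omega_{i-j}\,\mathbf{p}_{i-j}=\sum_{j=\max(0,i-n)}^{\min(m,i)}\frac{\binom{m}{j}\binom{n}{i-j}}{\binom{m+n}{i}}\check\omega_j\,\omega_{i-j}\,\check{\mathbf{p}}_{j},\qquad i=0,1,\dots,n+m,$$ and $$r_k=\sum_{j=\max(0,k-n+m)}^{\min(m,k)}\check r_j\binom{m}{j}\frac{\binom{n-m}{k-j}}{\binom{n}{k}},\qquad k=0,1,\dots,n.$$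
   Context: Let $B_i^n(t)=\binom{n}{i}t^i(1-t)^{n-i}$ denote the Bernstein polynomials. A disk rational Bézier curve of degree $n$ with control disks $(\mathbf{p}_i)$ having centers $\mathbf{p}_i\in\mathbb{R}^2$ and radii $r_i\ge0$, and weights $\omega_i>0$, $i=0,\dots,n$, is the family of disks $(\mathbf{p})(t)=[\mathbf{p}(t);r(t)]$, $0\le t\le 1$, with center curve $\mathbf{p}(t)=\dfrac{\sum_{i=0}^n \mathbf{p}_i\omega_iB_i^n(t)}{\sum_{i=0}^n\omega_iB_i^n(t)}$ and (polynomial, non-rational) radius function $r(t)=\sum_{i=0}^n r_iB_i^n(t)$; i.e. $(\mathbf{p})(t)$ is the closed disk of center $\mathbf{p}(t)$ and radius $r(t)$. *)

From HB Require Import structures.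
From mathcomp Require Import all_boot all_order all_algebra.
From mathcomp Require Import reals.
Set Implicit Arguments. Unset Strict Implicit. Unset Printing Implicit Defensive.
Import Order.TTheory GRing.Theory Num.Theory.
Local Open Scope ring_scope.

Definition bernstein {R : realType} (n i : nat) (t : R) : R :=
  'C(n, i)%:R * t ^+ i * (1 - t) ^+ (n - i).

Definition rb_center {R : realType} (n : nat) (p : nat -> 'rV[R]_2)
    (w : nat -> R) (t : R) : 'rV[R]_2 :=
  (\sum_(0 <= i < n.+1) w i * bernstein n i t)^-1 *:
    \sum_(0 <= i < n.+1) (w i * bernstein n i t) *: p i.

Definition rb_radius {R : realType} (n : nat) (r : nat -> R) (t : R) : R :=
  \sum_(0 <= i < n.+1) r i * bernstein n i t.

(* Compare both sides in the Bernstein basis.  The weight sums are positive on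
   [0,1], so the center curves agree iff their cross-multiplied numerators do;
   each cross product is a product of Bernstein sums of degrees m and n, which
   B_j^m B_i^n = C(m,j) C(n,i) / C(m+n,i+j) B_(i+j)^(m+n) turns into a single
   Bernstein sum of degree n+m.  The radius of degree m is elevated to degree n
   by multiplying it with the partition of unity of degree n-m.  The Bernstein
   polynomials of a fixed degree are linearly independent already as functions
   on [0,1], so agreement on [0,1] amounts to equality of coefficients. *)

From HB Require Import structures.
From mathcomp Require Import all_boot all_order all_algebra.
From mathcomp Require Import reals.
From mathcomp Require Import ring zify.
Import Order.TTheory GRing.Theory Num.Theory.
Local Open Scope ring_scope.

Lemma sum_nat_window (V : nmodType) (F : nat -> V) (a b N : nat) :
  (a <= b <= N)%N ->
  \sum_(0 <= j < N) (if (a <= j < b)%N then F j else 0) = \sum_(a <= j < b) F j.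
Proof.
move=> /andP [leab lebN].
rewrite (big_cat_nat (n := a)) ?(leq_trans leab) //= (big_cat_nat leab lebN) /=.
rewrite big_nat_cond big1 ?add0r => [|j /andP [/andP [_ ltja] _]]; last first.
  by rewrite ifF // leqNgt ltja.
rewrite [X in _ + X]big_nat_cond [X in _ + X]big1 ?addr0 => [|j /andP [/andP [lebj _] _]].
  by apply: eq_big_nat => j ->.
by rewrite ifF // [(j < b)%N]ltnNge lebj andbF.
Qed.

Lemma scalerV_eq_cross (F : fieldType) (V : lmodType F) (a b : F) (x y : V) :
  a != 0 -> b != 0 -> (a^-1 *: x = b^-1 *: y) <-> (b *: x - a *: y = 0).
Proof.
move=> a_neq0 b_neq0; split => [e | /eqP]; last rewrite subr_eq0 => /eqP e.
  apply/eqP; rewrite subr_eq0 -(scalerKV a_neq0 x) e !scalerA.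
  by rewrite mulrAC mulfV ?mul1r.
by rewrite -(scalerK b_neq0 x) e !scalerA mulrAC mulVf ?mul1r.
Qed.

Lemma bernstein_poly_coef_eq0 {R : idomainType} {N : nat} {c : nat -> R} :
  \sum_(0 <= i < N.+1) c i *: ('X^i * (1 - 'X) ^+ (N - i)) = 0 :> {poly R} ->
  forall i, (i <= N)%N -> c i = 0.
Proof.
elim: N c => [|N IHN] c.
  by rewrite big_nat1 mulr1 alg_polyC => /polyC_inj c0 [|].
rewrite big_nat_recl // mul1r subn0.
have -> : \sum_(0 <= i < N.+1) c i.+1 *: ('X^(i.+1) * (1 - 'X) ^+ (N.+1 - i.+1))
    = 'X * \sum_(0 <= i < N.+1) c i.+1 *: ('X^i * (1 - 'X) ^+ (N - i)) :> {poly R}.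
  by rewrite mulr_sumr; apply: eq_bigr => i _; rewrite subSS exprS -mulrA scalerAr.
move=> sum_eq0.
(* evaluating at 0 kills every term but the first *)
have c0 : c 0%N = 0.
  have := congr1 (horner^~ 0) sum_eq0.
  by rewrite !hornerE subr0 expr1n mulr1.
move: sum_eq0; rewrite c0 scale0r add0r => /eqP.
rewrite mulf_eq0 polyX_eq0 => /eqP /(IHN (fun i => c i.+1)) ci_eq0 [|i] //; exact: ci_eq0.
Qed.

Lemma poly_eq0_on_unit_interval (R : numFieldType) (P : {poly R}) :
  (forall t : R, 0 <= t <= 1 -> P.[t] = 0) -> P = 0.
Proof.
move=> P01; apply/eqP/negPn/negP => P_neq0.
pose s := [seq (k.+1%:R : R)^-1 | k <- iota 0 (size P)].
have roots_s : all (root P) s.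
  apply/allP => _ /mapP [k _ ->]; apply/rootP/P01.
  by rewrite invr_ge0 ler0n invf_le1 ?ler1n ?ltr0n.
have uniq_s : uniq s.
  rewrite map_inj_uniq ?iota_uniq // => a b /invr_inj /eqP.
  by rewrite eqr_nat eqSS => /eqP.
by have := max_poly_roots P_neq0 roots_s uniq_s; rewrite size_map size_iota ltnn.
Qed.

Section Bernstein.
Context {R : realType}.
Implicit Types (t : R) (n m : nat).

Lemma bernstein_ge0 n i t : 0 <= t <= 1 -> 0 <= bernstein n i t.
Proof. by case/andP=> t_ge0 t_le1; rewrite !mulr_ge0 ?exprn_ge0 ?subr_ge0. Qed.

Lemma sum_bernstein N t : \sum_(0 <= i < N.+1) bernstein N i t = 1.
Proof.
have := exprDn (1 - t) t N; rewrite subrK expr1n => ->; rewrite big_mkord.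
by apply: eq_bigr => i _; rewrite /bernstein -mulr_natl; ring.
Qed.

Lemma bernstein_coef_eq0 N (a : nat -> R) :
  (forall t, 0 <= t <= 1 -> \sum_(0 <= i < N.+1) a i * bernstein N i t = 0) ->
  forall i, (i <= N)%N -> a i = 0.
Proof.
move=> sum_eq0 i le_iN.
pose P : {poly R} :=
  \sum_(0 <= i < N.+1) (a i * 'C(N, i)%:R) *: ('X^i * (1 - 'X) ^+ (N - i)).
have P_eq0 : P = 0.
  apply: poly_eq0_on_unit_interval => t t01; rewrite -(sum_eq0 t t01) horner_sum.
  by apply: eq_bigr => k _; rewrite !hornerE /bernstein.
have /eqP := bernstein_poly_coef_eq0 P_eq0 i le_iN.
by rewrite mulf_eq0 pnatr_eq0 -leqn0 leqNgt bin_gt0 le_iN orbF => /eqP.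
Qed.

Lemma bernstein_mx_coef_eq0 N p q (A : nat -> 'M[R]_(p, q)) :
  (forall t, 0 <= t <= 1 -> \sum_(0 <= k < N.+1) bernstein N k t *: A k = 0) ->
  forall k, (k <= N)%N -> A k = 0.
Proof.
move=> sum_eq0 k le_kN; apply/matrixP => x y; rewrite mxE.
apply: (@bernstein_coef_eq0 N (fun k => A k x y)) => // t t01.
have := congr1 (fun M : 'M_(p, q) => M x y) (sum_eq0 t t01); rewrite summxE mxE => e.
by rewrite -[RHS]e; apply: eq_bigr => i _; rewrite mxE mulrC.
Qed.

Definition bernstein_prod_coef m n k j : R :=
  'C(m, j)%:R * 'C(n, k - j)%:R / 'C(m + n, k)%:R.

Lemma bernstein_mul n m i j t : (i <= n)%N -> (j <= m)%N ->
  bernstein m j t * bernstein n i t =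
  bernstein_prod_coef m n (i + j) j * bernstein (n + m) (i + j) t.
Proof.
move=> le_in le_jm; rewrite /bernstein_prod_coef /bernstein addnK [(n + m)%N]addnC.
have -> : (m + n - (i + j) = (m - j) + (n - i))%N by lia.
have : 'C(m + n, i + j)%:R != 0 :> R by rewrite pnatr_eq0 -lt0n bin_gt0; lia.
by rewrite !exprD => ?; field.
Qed.

(* the coefficients of the product come from the terms with i + j = k,
   i.e. j ranges over max(0, k-n) <= j <= min(m, k) *)
Lemma bernstein_sum_mul (V : lmodType R) (F : nat -> nat -> V) n m t :
  \sum_(0 <= j < m.+1) \sum_(0 <= i < n.+1) (bernstein m j t * bernstein n i t) *: F i j
  = \sum_(0 <= k < (n + m).+1) bernstein (n + m) k t *:
      \sum_(maxn 0 (k - n) <= j < (minn m k).+1)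
        bernstein_prod_coef m n k j *: F (k - j)%N j.
Proof.
pose G k j := (bernstein (n + m) k t * bernstein_prod_coef m n k j) *: F (k - j)%N j.
transitivity (\sum_(0 <= k < (n + m).+1) \sum_(0 <= j < m.+1)
   (if (maxn 0 (k - n) <= j < (minn m k).+1)%N then G k j else 0)); last first.
  apply: eq_big_nat => k /andP [_ lt_k].
  rewrite scaler_sumr -(sum_nat_window _ _ (maxn 0 (k - n)) (minn m k).+1 m.+1);
    last by apply/andP; split; lia.
  by apply: eq_bigr => j _; case: ifP; rewrite // /G scalerA.
rewrite [RHS]exchange_big_nat; apply: eq_big_nat => j /andP [_ lt_jm].
transitivity (\sum_(0 <= k < (n + m).+1) (if (j <= k < j + n.+1)%N then G k j else 0)).
  rewrite sum_nat_window; last by apply/andP; split; lia.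
  rewrite -[in RHS](add0n j) big_addn addKn.
  apply: eq_big_nat => i /andP [_ lt_in].
  by rewrite /G addnK bernstein_mul 1?mulrC //; lia.
apply: eq_bigr => k _; congr (if _ then _ else _).
by apply/idP/idP => /andP [? ?]; apply/andP; split; lia.
Qed.

Lemma bernstein_weighted_sum_gt0 n (w : nat -> R) t :
  (forall i, (i <= n)%N -> 0 < w i) -> 0 <= t <= 1 ->
  0 < \sum_(0 <= i < n.+1) w i * bernstein n i t.
Proof.
move=> w_gt0 t01.
have /hasP [i i_in /= B_gt0] :
    has (fun i => true && (0 < bernstein n i t)) (index_iota 0 n.+1).
  by rewrite -psumr_neq0 ?sum_bernstein ?oner_neq0 // => i _; apply: bernstein_ge0.
have le_in : (i <= n)%N by rewrite mem_index_iota in i_in.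
have terms_ge0 k : (k \in index_iota 0 n.+1) && true -> 0 <= w k * bernstein n k t.
  rewrite mem_index_iota andbT => /andP [_ lt_kn].
  by rewrite mulr_ge0 ?bernstein_ge0 ?(ltW (w_gt0 _ lt_kn)).
rewrite big_seq_cond lt0r sumr_ge0 // andbT psumr_neq0 //.
by apply/hasP; exists i; rewrite // i_in mulr_gt0 ?w_gt0.
Qed.

Definition weighted_prod_coef n m (w wc : nat -> R) (q : nat -> nat -> 'rV[R]_2) k :=
  \sum_(maxn 0 (k - n) <= j < (minn m k).+1)
    (bernstein_prod_coef m n k j * wc j * w (k - j)%N) *: q (k - j)%N j.

Lemma rb_center_cross_diff n m (p : nat -> 'rV[R]_2) (w : nat -> R)
    (pc : nat -> 'rV[R]_2) (wc : nat -> R) t :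
  (\sum_(0 <= j < m.+1) wc j * bernstein m j t) *:
    \sum_(0 <= i < n.+1) (w i * bernstein n i t) *: p i
  - (\sum_(0 <= i < n.+1) w i * bernstein n i t) *:
    \sum_(0 <= j < m.+1) (wc j * bernstein m j t) *: pc j
  = \sum_(0 <= k < (n + m).+1) bernstein (n + m) k t *:
      (weighted_prod_coef n m w wc (fun i _ => p i) k
       - weighted_prod_coef n m w wc (fun _ j => pc j) k).
Proof.
have expand_n : (\sum_(0 <= j < m.+1) wc j * bernstein m j t) *:
      \sum_(0 <= i < n.+1) (w i * bernstein n i t) *: p i
    = \sum_(0 <= j < m.+1) \sum_(0 <= i < n.+1)
        (bernstein m j t * bernstein n i t) *: ((wc j * w i) *: p i).
  rewrite scaler_suml; apply: eq_bigr => j _; rewrite scaler_sumr; apply: eq_bigr => i _.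
  by rewrite !scalerA; congr (_ *: _); ring.
have expand_m : (\sum_(0 <= i < n.+1) w i * bernstein n i t) *:
      \sum_(0 <= j < m.+1) (wc j * bernstein m j t) *: pc j
    = \sum_(0 <= j < m.+1) \sum_(0 <= i < n.+1)
        (bernstein m j t * bernstein n i t) *: ((wc j * w i) *: pc j).
  rewrite exchange_big_nat scaler_suml; apply: eq_bigr => i _.
  rewrite scaler_sumr; apply: eq_bigr => j _.
  by rewrite !scalerA; congr (_ *: _); ring.
rewrite expand_n expand_m !bernstein_sum_mul -sumrB; apply: eq_bigr => k _.
by rewrite -scalerBr; congr (_ *: (_ - _)); apply: eq_bigr => j _; rewrite scalerA !mulrA.
Qed.

Lemma rb_center_eq_iff n m (p : nat -> 'rV[R]_2) (w : nat -> R)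
    (pc : nat -> 'rV[R]_2) (wc : nat -> R) :
  (forall i, (i <= n)%N -> 0 < w i) -> (forall j, (j <= m)%N -> 0 < wc j) ->
  (forall t, 0 <= t <= 1 -> rb_center n p w t = rb_center m pc wc t)
  <->
  (forall k, (k <= n + m)%N ->
     weighted_prod_coef n m w wc (fun i _ => p i) k
     = weighted_prod_coef n m w wc (fun _ j => pc j) k).
Proof.
move=> w_gt0 wc_gt0.
have cross t : 0 <= t <= 1 -> rb_center n p w t = rb_center m pc wc t <->
    \sum_(0 <= k < (n + m).+1) bernstein (n + m) k t *:
      (weighted_prod_coef n m w wc (fun i _ => p i) k
       - weighted_prod_coef n m w wc (fun _ j => pc j) k) = 0.
  move=> t01; rewrite -rb_center_cross_diff.
  by apply: scalerV_eq_cross; rewrite gt_eqF // bernstein_weighted_sum_gt0.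
split => [center_eq | coef_eq t t01].
  move=> k le_k; apply/subr0_eq; move: k le_k.
  by apply: bernstein_mx_coef_eq0 => t t01; apply/(cross t t01)/center_eq.
apply/(cross t t01); rewrite big_nat_cond big1 // => k /andP [/andP [_ lt_k] _].
by rewrite coef_eq ?subrr ?scaler0.
Qed.

Definition elevated_coef n m (rc : nat -> R) k : R :=
  \sum_(maxn 0 (k + m - n) <= j < (minn m k).+1)
    rc j * 'C(m, j)%:R * ('C(n - m, k - j)%:R / 'C(n, k)%:R).

(* multiply by the partition of unity of degree n - m *)
Lemma rb_radius_degree_elevation n m (rc : nat -> R) t : (m <= n)%N ->
  rb_radius m rc t = \sum_(0 <= k < n.+1) elevated_coef n m rc k * bernstein n k t.
Proof.
move=> le_mn; rewrite /rb_radius.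
transitivity (\sum_(0 <= j < m.+1) \sum_(0 <= i < (n - m).+1)
   (bernstein m j t * bernstein (n - m) i t) *: (rc j : R^o)).
  apply: eq_bigr => j _; rewrite -[LHS]mulr1 -(sum_bernstein (n - m) t) mulr_sumr.
  by apply: eq_bigr => i _; rewrite /GRing.scale /=; ring.
rewrite bernstein_sum_mul subnK //; apply: eq_bigr => k _.
rewrite mulrC /elevated_coef.
have -> : (k + m - n = k - (n - m))%N by lia.
rewrite /GRing.scale /=; congr (_ * _).
by apply: eq_bigr => j _; rewrite /bernstein_prod_coef subnKC //; ring.
Qed.

Lemma rb_radius_eq_iff n m (r rc : nat -> R) : (m <= n)%N ->
  (forall t, 0 <= t <= 1 -> rb_radius n r t = rb_radius m rc t)
  <-> (forall k, (k <= n)%N -> r k = elevated_coef n m rc k).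
Proof.
move=> le_mn; split => [radius_eq | coef_eq t t01]; last first.
  rewrite (rb_radius_degree_elevation n m rc t le_mn); apply: eq_big_nat => k /andP [_ lt_k].
  by rewrite coef_eq.
move=> k le_k; apply/subr0_eq; move: k le_k; apply: bernstein_coef_eq0 => t t01.
under eq_bigr do rewrite mulrBl.
by rewrite sumrB -rb_radius_degree_elevation // -radius_eq // subrr.
Qed.

End Bernstein.

Theorem mainTheorem1 (R : realType) (n m : nat) (hnm : (m < n)%N)
    (p : nat -> 'rV[R]_2) (r w : nat -> R)
    (pc : nat -> 'rV[R]_2) (rc wc : nat -> R)
    (hr : forall i, (i <= n)%N -> 0 <= r i)
    (hw : forall i, (i <= n)%N -> 0 < w i)
    (hrc : forall j, (j <= m)%N -> 0 <= rc j)
    (hwc : forall j, (j <= m)%N -> 0 < wc j) :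
  (forall t : R, 0 <= t <= 1 ->
      rb_center n p w t = rb_center m pc wc t /\
      rb_radius n r t = rb_radius m rc t)
  <->
  ((forall i, (i <= n + m)%N ->
      \sum_(maxn 0 (i - n)%N <= j < (minn m i).+1)
         ('C(m, j)%:R * 'C(n, (i - j)%N)%:R / 'C((m + n)%N, i)%:R * wc j * w (i - j)%N)
           *: p (i - j)%N
      = \sum_(maxn 0 (i - n)%N <= j < (minn m i).+1)
         ('C(m, j)%:R * 'C(n, (i - j)%N)%:R / 'C((m + n)%N, i)%:R * wc j * w (i - j)%N)
           *: pc j)
   /\
   (forall k, (k <= n)%N ->
      r k = \sum_(maxn 0 (k + m - n)%N <= j < (minn m k).+1)
              rc j * 'C(m, j)%:R * ('C((n - m)%N, (k - j)%N)%:R / 'C(n, k)%:R))).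
Proof.
have center_iff := rb_center_eq_iff n m p w pc wc hw hwc.
have radius_iff := rb_radius_eq_iff n m r rc (ltnW hnm).
split => [curves_eq | [/center_iff center_eq /radius_iff radius_eq] t t01].
  by split; [apply/center_iff | apply/radius_iff] => t t01; case: (curves_eq t t01).
by split; [apply: center_eq | apply: radius_eq].
Qed.
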